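(* Let $p$ be an odd prime, let $\mathcal{Y}$ be an expansion of $(\mathbb{Z}_p,+,\operatorname{Val}_p)$, and let $\mathcal{Z}$ be the structure induced on $\mathbb{Z}$ by $\mathcal{Y}$. Suppose $\mathcal{Y}$ is dp-minimal and every $\mathcal{Z}$-definable subset of $\mathbb{Z}^n$ is of the form $X\cap Y$, where $X$ is a $\mathcal{Y}$-definable subset of $\mathbb{Z}_p^n$ and $Y$ is a $(\mathbb{Z},+)$-definable subset of $\mathbb{Z}^n$. Then $\mathcal{Z}$ is dp-minimal.
   Context: ''Definable'' means definable with parameters. The structure induced on $\mathbb{Z}\subseteq\mathbb{Z}_p$ by $\mathcal{Y}$ has an $n$-ary relation defining $\mathbb{Z}^n\cap W$ for each $\mathcal{Y}$-definable $W\subseteq\mathbb{Z}_p^n$. $(\mathbb{Z}_p,+,\operatorname{Val}_p)$ denotes the additive group of $p$-adic integers with the relation $\operatorname{Val}_p(a)\le\operatorname{Val}_p(b)$. *)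

From mathcomp Require Import all_boot all_order all_algebra.
Set Implicit Arguments. Unset Strict Implicit. Unset Printing Implicit Defensive.

Definition rset (M : Type) (n : nat) := ('I_n -> M) -> Prop.

Definition cons_fun (M : Type) (n : nat) (a : M) (x : 'I_n -> M) : 'I_n.+1 -> M :=
  fun i => match unlift ord0 i with Some j => x j | None => a end.

(* A structure on M is given by a family B of basic relations (B n A means A is
   a basic n-ary relation).  [definable B n A]: A is definable WITH PARAMETERS,
   i.e. first-order definable, generated from basic relations, equality and
   singletons {c} by complement, union, substitution of variables (reindexing
   by any map 'I_m -> 'I_n) and existential quantification (projection). *)
Inductive definable (M : Type) (B : forall n, rset M n -> Prop) :
    forall n, rset M n -> Prop :=
| def_basic n (A : rset M n) : B n A -> definable B A
| def_eq : definable B (fun x : 'I_2 -> M => x ord0 = x ord_max)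
| def_const (c : M) : definable B (fun x : 'I_1 -> M => x ord0 = c)
| def_compl n (A : rset M n) : definable B A -> definable B (fun x => ~ A x)
| def_union n (A A' : rset M n) :
    definable B A -> definable B A' -> definable B (fun x => A x \/ A' x)
| def_reindex m n (f : 'I_m -> 'I_n) (A : rset M m) :
    definable B A -> definable B (fun x : 'I_n -> M => A (fun i => x (f i)))
| def_proj n (A : rset M n.+1) :
    definable B A -> definable B (fun x : 'I_n -> M => exists a, A (cons_fun a x)).

Definition single_rel (M : Type) (k : nat) (R : rset M k) : forall n, rset M n -> Prop :=
  fun n A => exists e : k = n, A = eq_rect k (rset M) R n e.

(* dp-minimality: no ICT pattern of depth 2 in a single variable.  Stated in the
   standard compactness-equivalent finitary form inside the structure itself:
   there are no definable D(x;y), E(x;z) (x a single variable, parameters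
   allowed) such that for every N there are a_0..a_{N-1}, b_0..b_{N-1} with,
   for all i, j < N, some c satisfying D(c,a_i') <-> i' = i and
   E(c,b_j') <-> j' = j for all i', j' < N. *)
Definition dp_minimal (M : Type) (B : forall n, rset M n -> Prop) : Prop :=
  ~ exists (k l : nat) (D : rset M k.+1) (E : rset M l.+1),
      definable B D /\ definable B E /\
      forall N : nat, exists (a : nat -> 'I_k -> M) (b : nat -> 'I_l -> M),
        forall i j, i < N -> j < N -> exists c : M,
          (forall i', i' < N -> (D (cons_fun c (a i')) <-> i' = i)) /\
          (forall j', j' < N -> (E (cons_fun c (b j')) <-> j' = j)).

(* Z_p = inverse limit of Z/p^n Z: coherent sequences of residues f n < p^n. *)
Definition Zp_coh (p : nat) (f : nat -> nat) : Prop :=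
  forall n, f n < p ^ n /\ f n.+1 %% p ^ n = f n.
Definition padic (p : nat) := {f : nat -> nat | Zp_coh p f}.

Definition Zp_add_graph (p : nat) : rset (padic p) 3 := fun x =>
  forall n, (proj1_sig (x ord0) n + proj1_sig (x (lift ord0 ord0)) n) %% p ^ n
            = proj1_sig (x ord_max) n.

(* Val_p(a) <= Val_p(b): Val_p(a) = sup {n | p^n divides a}, and p^n divides a
   iff its residue mod p^n is 0; so Val(a) <= Val(b) iff every p^n dividing a
   divides b. *)
Definition Zp_val_le (p : nat) : rset (padic p) 2 := fun x =>
  forall n, proj1_sig (x ord0) n = 0 -> proj1_sig (x ord_max) n = 0.

Definition Z_emb (p : nat) (z : int) (a : padic p) : Prop :=
  forall n, (z %% (Posz (p ^ n)))%Z = Posz (proj1_sig a n).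

Definition restrZ (p n : nat) (W : rset (padic p) n) : rset int n := fun x =>
  exists y : 'I_n -> padic p, (forall i, @Z_emb p (x i) (y i)) /\ W y.

Definition induced (p : nat) (B : forall n, rset (padic p) n -> Prop) :
    forall n, rset int n -> Prop :=
  fun n A => exists W : rset (padic p) n, definable B W /\ A = restrZ W.

Definition Z_add_graph : rset int 3 := fun x => (x ord0 + x (lift ord0 ord0))%R = x ord_max.
Definition Zplus : forall n, rset int n -> Prop := single_rel Z_add_graph.

From mathcomp Require Import all_boot all_order all_algebra.
From mathcomp Require Import zify ring.
From Stdlib Require Import Classical FunctionalExtensionality PropExtensionality.
From Stdlib Require Import ProofIrrelevance ClassicalEpsilon.
Set Implicit Arguments. Unset Strict Implicit. Unset Printing Implicit Defensive.
Import GRing.Theory Num.Theory.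

(* Quantifier elimination for (Z, +) without order shows that a (Z, +)-definable set is
   invariant under moving a point within a residue class modulo some m <> 0 while keeping
   the truth values of finitely many linear equations phi_t(x) = e_t.  Hence, once the
   residue of the distinguished variable c is fixed, a Z-definable relation
   D(c; a) = X(c, a) /\ Y(c, a) agrees on Z with a relation D'(c; a') definable in Z_p,
   whose parameters a' are integers computed from a and that residue: an equation
   c * l + s = e becomes the conditions l | e - s and (l = 0 or c = (e - s) / l).
   Given an ICT pattern in Z of large depth, a double pigeonhole argument on the residues
   of its witnesses yields an N x N subpattern on which these residues are constant, and
   the relations D', E' then form an ICT pattern of depth N in Z_p, contradicting its
   dp-minimality. *)

(** * Definability *)

Lemma cons_fun0 (M : Type) n (a : M) (x : 'I_n -> M) : cons_fun a x ord0 = a.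
Proof. by rewrite /cons_fun unlift_none. Qed.

Lemma cons_funS (M : Type) n (a : M) (x : 'I_n -> M) i : cons_fun a x (lift ord0 i) = x i.
Proof. by rewrite /cons_fun liftK. Qed.

Lemma cons_fun_map (M M' : Type) (f : M -> M') n (a : M) (x : 'I_n -> M) :
  (fun i => f (cons_fun a x i)) = cons_fun (f a) (fun i => f (x i)).
Proof. by apply: functional_extensionality => i; rewrite /cons_fun; case: unlift. Qed.

Lemma cons_fun_map2 (M M' M'' : Type) (f : M -> M' -> M'') n a b
    (x : 'I_n -> M) (y : 'I_n -> M') :
  (fun i => f (cons_fun a x i) (cons_fun b y i)) = cons_fun (f a b) (fun i => f (x i) (y i)).
Proof. by apply: functional_extensionality => i; rewrite /cons_fun; case: unlift. Qed.

Lemma exists_indicator (I : Type) (Q : I -> Prop) : exists b : I -> bool, forall j, Q j <-> b j.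
Proof.
exists (fun j => if excluded_middle_informative (Q j) then true else false) => j.
by case: excluded_middle_informative.
Qed.

Section Definability.
Variables (M : Type) (B : forall n, rset M n -> Prop).

Lemma definable_ext n (A A' : rset M n) :
  definable B A -> (forall x, A x <-> A' x) -> definable B A'.
Proof.
move=> dA AA'; suff -> : A' = A by [].
by apply: functional_extensionality => x; apply: propositional_extensionality; split; apply AA'.
Qed.

Lemma def_coord_eq n (i j : 'I_n) : definable B (fun z : 'I_n -> M => z i = z j).
Proof.
exact: definable_ext (def_reindex (fun u : 'I_2 => if u == ord0 then i else j) (def_eq B)) _.
Qed.

Lemma def_coord_const n (i : 'I_n) (c : M) : definable B (fun z : 'I_n -> M => z i = c).
Proof. exact: definable_ext (def_reindex (fun _ => i) (def_const B c)) _. Qed.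

Lemma def_and n (A A' : rset M n) :
  definable B A -> definable B A' -> definable B (fun x => A x /\ A' x).
Proof.
move=> dA dA'; apply: definable_ext (def_compl (def_union (def_compl dA) (def_compl dA'))) _.
by move=> x; split; [move/not_or_and=> [/NNPP ? /NNPP ?]|case=> ?? []].
Qed.

Lemma def_prop n (P : Prop) : definable B (fun _ : 'I_n -> M => P).
Proof.
have dA := def_proj (def_reindex (fun _ : 'I_2 => (ord0 : 'I_n.+1)) (def_eq B)).
have dT := def_union dA (def_compl dA).
have [hP|nP] := classic P.
  by apply: definable_ext dT _ => x; split=> _ //; apply: classic.
by apply: definable_ext (def_compl dT) _ => x; split=> [[]|//]; exact: classic.
Qed.

Lemma def_exists_bits_seq n (I : eqType) (Q : I -> rset M n) (s : seq I)
    (G : (I -> bool) -> Prop) :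
  (forall i, definable B (Q i)) ->
  definable B (fun z => exists b : I -> bool, (forall i, i \in s -> (Q i z <-> b i)) /\ G b).
Proof.
move=> dQ; elim: s G => [|i s IH] G.
  apply: definable_ext (def_prop n (exists b, G b)) _ => z.
  by split; case=> b hb; exists b => //; case: hb.
have d1 := def_and (dQ i) (IH (fun b => b i /\ G b)).
have d2 := def_and (def_compl (dQ i)) (IH (fun b => ~~ b i /\ G b)).
apply: definable_ext (def_union d1 d2) _ => z; split.
- case=> -[Qi [b [hb [bi Gb]]]]; exists b; split=> // j;
    rewrite inE => /orP [/eqP ->|js]; try exact: hb.
  + by split.
  + by split=> // Qb; move: bi; rewrite Qb.
- case=> b [hb Gb]; have hi := hb i (mem_head _ _).
  have hs j : j \in s -> (Q j z <-> b j) by move=> js; apply: hb; rewrite inE js orbT.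
  have [Qi|nQi] := classic (Q i z); [left|right]; split=> //; exists b; do 2!split=> //.
  - exact/hi.
  - by apply/negP => /hi.
Qed.

(* [G] applied to the truth values of the [Q i]: any Boolean combination of them. *)
Lemma def_exists_bits n (I : finType) (Q : I -> rset M n) (G : (I -> bool) -> Prop) :
  (forall i, definable B (Q i)) ->
  definable B (fun z => exists b : I -> bool, (forall i, Q i z <-> b i) /\ G b).
Proof.
move=> dQ; apply: definable_ext (def_exists_bits_seq (enum I) G dQ) _ => z.
by split; case=> b [hb Gb]; exists b; split=> // i; first apply: hb; rewrite ?mem_enum.
Qed.

(* A point of [M^(1 + #|J|)] is read as a head coordinate followed by parameters
   indexed by [J]. *)
Definition param (J : finType) (z : 'I_#|J|.+1 -> M) (j : J) : M :=
  z (lift ord0 (enum_rank j)).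

Definition tuple_of (J : finType) (c : M) (u : J -> M) : 'I_#|J|.+1 -> M :=
  cons_fun c (fun i => u (enum_val i)).

Lemma tuple_of0 (J : finType) (c : M) (u : J -> M) : tuple_of c u ord0 = c.
Proof. exact: cons_fun0. Qed.

Lemma param_tuple_ofE (I : Type) (J : finType) (c : M) (u : J -> M) (h : I -> J) :
  (fun i => param (tuple_of c u) (h i)) = (fun i => u (h i)).
Proof.
by apply: functional_extensionality => i; rewrite /param /tuple_of cons_funS enum_rankK.
Qed.

Lemma def_reindex_param n (J : finType) (h : 'I_n -> J) (D : rset M n.+1) :
  definable B D ->
  definable B (fun z : 'I_#|J|.+1 -> M => D (cons_fun (z ord0) (fun i => param z (h i)))).
Proof.
move=> dD; pose f : 'I_n.+1 -> 'I_#|J|.+1 := cons_fun ord0 (fun i => lift ord0 (enum_rank (h i))).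
apply: definable_ext (def_reindex f dD) _ => z.
by rewrite (cons_fun_map z).
Qed.

End Definability.

(** * Monochromatic grids *)

Lemma pigeonhole_inj (C : finType) (N : nat) (col : nat -> C) :
  exists g (I : nat -> nat), (forall i, i < N -> I i < N * #|C| /\ col (I i) = g) /\
    {in gtn N &, injective I}.
Proof.
case: N => [|N]; first by exists (col 0), id; split=> // i j.
pose s := iota 0 (N.+1 * #|C|).
have [g hg] : exists g, N.+1 <= count (fun x => col x == g) s.
  apply/existsP; apply: contraT; rewrite negb_exists => /forallP small.
  have : \sum_(g : C) count (fun x => col x == g) s <= \sum_(g : C) N.
    by apply: leq_sum => g _; have := small g; rewrite -ltnNge ltnS.
  have -> : \sum_(g : C) count (fun x => col x == g) s = size s.
    by rewrite -sum1_size (partition_big col predT) //; apply: eq_bigr => g _; rewrite sum1_count.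
  rewrite size_iota sum_nat_const mulnC.
  have : 0 < #|C| by apply/card_gt0P; exists (col 0).
  move: #|C| => c; nia.
pose f := [seq x <- s | col x == g].
have sf : size f = count (fun x => col x == g) s by rewrite size_filter.
exists g, (nth 0 f); split=> [i iN|i j iN jN /eqP].
  have : nth 0 f i \in f by apply: mem_nth; rewrite sf; apply: leq_trans hg.
  by rewrite mem_filter mem_iota => /andP [/eqP -> /andP [_]].
rewrite nth_uniq ?sf ?(leq_trans iN hg) ?(leq_trans jN hg) ?filter_uniq ?iota_uniq //.
by move/eqP.
Qed.

Lemma monochromatic_grid (C : finType) (N : nat) : exists N0, forall col : nat -> nat -> C,
  exists g (I J : nat -> nat),
    [/\ forall i, i < N -> I i < N0, forall j, j < N -> J j < N0,
        {in gtn N &, injective I}, {in gtn N &, injective J} &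
        forall i j, i < N -> j < N -> col (I i) (J j) = g].
Proof.
pose R := N * #|C|; exists (R + N * #|{ffun 'I_R -> C}|) => col.
pose column j := [ffun r : 'I_R => col (nat_of_ord r) j].
have [gc [J [hJ iJ]]] := pigeonhole_inj N column.
pose row_col r := odflt (col 0 0) (omap gc (insub r)).
have [g [I [hI iI]]] := pigeonhole_inj N row_col.
exists g, I, J; split=> // [i iN|j jN|i j iN jN].
- by have [h _] := hI i iN; apply: leq_trans h _; rewrite leq_addr.
- by have [h _] := hJ j jN; apply: leq_trans h _; rewrite leq_addl.
have [IiR <-] := hI i iN; have [_ gcE] := hJ j jN.
rewrite /row_col; case: insubP => [r _ rv|]; last by rewrite IiR.
by rewrite /= -gcE /column ffunE rv.
Qed.

Local Open Scope ring_scope.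

(** * Sets definable in (Z, +) *)

Definition additive_form n (phi : ('I_n -> int) -> int) :=
  forall x y, phi (fun i => x i + y i) = phi x + phi y.

Definition eqmodv n (m : int) (x y : 'I_n -> int) :=
  exists w : 'I_n -> int, forall i, y i = x i + m * w i.

Definition pattern_equiv n (m : int) (T : Type) (phi : T -> ('I_n -> int) -> int)
    (e : T -> int) (x y : 'I_n -> int) :=
  eqmodv m x y /\ forall t, phi t x = e t <-> phi t y = e t.

Definition pattern_invariant n (m : int) (T : Type) (phi : T -> ('I_n -> int) -> int)
    (e : T -> int) (A : rset int n) :=
  forall x y, pattern_equiv m phi e x y -> A x -> A y.

Definition pattern_definable n (A : rset int n) :=
  exists (m : int) (T : finType) (phi : T -> ('I_n -> int) -> int) (e : T -> int),
    [/\ m != 0, forall t, additive_form (phi t) & pattern_invariant m phi e A].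

Section AdditiveForm.
Variables (n : nat) (phi : ('I_n -> int) -> int).
Hypothesis phi_add : additive_form phi.

Lemma additive_form0 : phi (fun _ => 0) = 0.
Proof.
have := phi_add (fun _ => 0) (fun _ => 0).
have -> : (fun _ : 'I_n => (0 : int) + 0) = (fun _ => 0).
  by apply: functional_extensionality => i; rewrite addr0.
by move/(congr1 (fun v => v - phi (fun _ => 0))); rewrite subrr addrK => /esym.
Qed.

Lemma additive_formN x : phi (fun i => - x i) = - phi x.
Proof.
apply/eqP; rewrite -subr_eq0 opprK addrC -phi_add.
have -> : (fun i => x i + - x i) = (fun _ => 0).
  by apply: functional_extensionality => i; rewrite subrr.
by rewrite additive_form0.
Qed.

Lemma additive_formZ (k : int) x : phi (fun i => k * x i) = k * phi x.
Proof.
have formZn (j : nat) : phi (fun i => j%:Z * x i) = j%:Z * phi x.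
  elim: j => [|j IH].
    have -> : (fun i => 0%:Z * x i) = (fun _ => 0).
      by apply: functional_extensionality => i; rewrite mul0r.
    by rewrite additive_form0 mul0r.
  have -> : (fun i => j.+1%:Z * x i) = (fun i => j%:Z * x i + x i).
    by apply: functional_extensionality => i; rewrite intS; ring.
  by rewrite phi_add IH intS; ring.
case: k => k; first exact: formZn.
rewrite NegzE mulNr -formZn -additive_formN.
by congr phi; apply: functional_extensionality => i; rewrite mulNr.
Qed.

Lemma additive_form_eqmod (m : int) x w :
  phi (fun i => x i + m * w i) = phi x + m * phi w.
Proof. by rewrite phi_add additive_formZ. Qed.

End AdditiveForm.

Lemma additive_form_cons n (phi : ('I_n.+1 -> int) -> int) a x : additive_form phi ->
  phi (cons_fun a x) = a * phi (cons_fun 1 (fun _ => 0)) + phi (cons_fun 0 x).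
Proof.
move=> phi_add; rewrite -additive_formZ // -phi_add; congr phi.
by apply: functional_extensionality => i; rewrite /cons_fun; case: unlift => *; ring.
Qed.

Lemma eqmodv_sym n m (x y : 'I_n -> int) : eqmodv m x y -> eqmodv m y x.
Proof. by case=> w xy; exists (fun i => - w i) => i; rewrite xy; ring. Qed.

Lemma eqmodv_dvd n m q (x y : 'I_n -> int) : eqmodv (m * q) x y -> eqmodv m x y.
Proof. by case=> w xy; exists (fun i => q * w i) => i; rewrite xy; ring. Qed.

Lemma pattern_equiv_sym n m (T : Type) phi e (x y : 'I_n -> int) :
  @pattern_equiv n m T phi e x y -> pattern_equiv m phi e y x.
Proof. by case=> /eqmodv_sym xy pxy; split=> // t; rewrite pxy. Qed.

Lemma pattern_definable_form n (phi : ('I_n -> int) -> int) (c : int) (A : rset int n) :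
  additive_form phi -> (forall x, A x <-> phi x = c) -> pattern_definable A.
Proof.
move=> phi_add AE; exists 1, unit, (fun _ => phi), (fun _ => c); split=> //.
by move=> x y [_ /(_ tt) pxy] /AE /pxy /AE.
Qed.

(* Cross-multiplying by the nonzero slope eliminates the unknown [c]. *)
Lemma lin_eq_elim (R : idomainType) (lk lj c sk sj ek ej : R) : lk != 0 ->
  c * lk + sk = ek -> (c * lj + sj = ej <-> lk * sj - lj * sk = lk * ej - lj * ek).
Proof.
move=> lk0 <-; split=> [<-|h]; first ring.
apply: (mulfI lk0); apply/eqP; rewrite -subr_eq0.
have -> : lk * (c * lj + sj) - lk * ej = lk * sj - lj * sk - (lk * ej - lj * (c * lk + sk)).
  by ring.
by rewrite h subrr.
Qed.

Lemma mul_large_neq (a m l s S : int) : `|s| <= S -> m != 0 -> l != 0 ->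
  (a + m * (1 + `|a| + S)) * l != s.
Proof.
move=> sS m0 l0; have m1 : 1 <= `|m| by lia.
have l1 : 1 <= `|l| by lia.
apply/eqP => eqs; move: sS; rewrite -eqs; nia.
Qed.

Section Projection.
Variables (n : nat) (A : rset int n.+1) (m : int) (T : finType).
Variables (phi : T -> ('I_n.+1 -> int) -> int) (e : T -> int).
Hypotheses (m0 : m != 0) (phi_add : forall t, additive_form (phi t)).
Hypothesis A_inv : pattern_invariant m phi e A.

Let slope t := phi t (cons_fun 1 (fun _ => 0)).
Let psi t x := phi t (cons_fun 0 x).
Let P := \prod_(t | slope t != 0) slope t.

Let phi' (u : T + T * T) (x : 'I_n -> int) : int := match u with
  | inl t => psi t x
  | inr (k, j) => slope k * psi j x - slope j * psi k x end.
Let e' (u : T + T * T) : int := match u with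
  | inl t => e t
  | inr (k, j) => slope k * e j - slope j * e k end.

Let phi_cons t a x : phi t (cons_fun a x) = a * slope t + psi t x.
Proof. exact: additive_form_cons. Qed.

Let psi_add t : additive_form (psi t).
Proof. by move=> x y; rewrite /psi -phi_add (cons_fun_map2 +%R) addr0. Qed.

Let solvable_case x y a k : pattern_equiv (m * P) phi' e' x y -> A (cons_fun a x) ->
  slope k != 0 -> phi k (cons_fun a x) = e k -> exists b, A (cons_fun b y).
Proof.
move=> [[w xy] pxy] Aax sk0; rewrite phi_cons => hk.
pose Q := \prod_(t | (slope t != 0) && (t != k)) slope t.
have PQ : P = slope k * Q by rewrite /P (bigD1 k).
have psi_y t : psi t y = psi t x + m * P * psi t w.
  rewrite -additive_form_eqmod //; congr psi.
  by apply: functional_extensionality => i; rewrite xy.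
exists (a - m * Q * psi k w); apply: A_inv Aax; split.
  exists (cons_fun (- (Q * psi k w)) (fun i => P * w i)) => i.
  by rewrite /cons_fun; case: unlift => [j|]; rewrite ?xy; ring.
have hk' : (a - m * Q * psi k w) * slope k + psi k y = e k by rewrite psi_y -hk PQ; ring.
move=> j; rewrite !phi_cons (lin_eq_elim _ _ _ sk0 hk) (lin_eq_elim _ _ _ sk0 hk').
exact: (pxy (inr (k, j))).
Qed.

Let unsolvable_case x y a : pattern_equiv (m * P) phi' e' x y -> A (cons_fun a x) ->
  (forall k, slope k != 0 -> phi k (cons_fun a x) <> e k) -> exists b, A (cons_fun b y).
Proof.
move=> [[w xy] pxy] Aax nsol.
pose S := \sum_t `|e t - psi t y|.
exists (a + m * (1 + `|a| + S)); apply: A_inv Aax; split.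
  exists (cons_fun (1 + `|a| + S) (fun i => P * w i)) => i.
  by rewrite /cons_fun; case: unlift => [j|]; rewrite ?xy; ring.
move=> t; have [st0|st0] := eqVneq (slope t) 0.
  by rewrite !phi_cons st0 !mulr0 !add0r; exact: (pxy (inl t)).
split=> [/(nsol t st0)//|]; rewrite phi_cons => yt.
have tS : `|e t - psi t y| <= S.
  by rewrite /S (bigD1 t) //= lerDl sumr_ge0 // => u _; exact: normr_ge0.
by move: (mul_large_neq a tS m0 st0); rewrite -yt addrK eqxx.
Qed.

Lemma pattern_definable_proj : pattern_definable (fun x => exists a, A (cons_fun a x)).
Proof.
exists (m * P), (T + T * T)%type, phi', e'; split.
- by rewrite mulf_neq0 //; apply/prodf_neq0 => t.
- case=> [t|[k j]] x y /=; first exact: psi_add.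
  by rewrite !psi_add; ring.
- move=> x y xy [a Aax].
  have [[k [sk0 hk]]|nsol] := classic (exists k, slope k != 0 /\ phi k (cons_fun a x) = e k).
    exact: solvable_case Aax sk0 hk.
  by apply: unsolvable_case xy Aax _ => t st0 hat; apply: nsol; exists t.
Qed.

End Projection.

Lemma Zplus_pattern_definable n (A : rset int n) : definable Zplus A -> pattern_definable A.
Proof.
elim=> {n A} [n A [en ->]| |c|n A _ [m [T [phi [e [m0 phi_add A_inv]]]]]
  |n A A' _ [m [T [phi [e [m0 phi_add A_inv]]]]] _ [m' [T' [phi' [e' [m0' phi_add' A_inv']]]]]
  |k n f A _ [m [T [phi [e [m0 phi_add A_inv]]]]]
  |n A _ [m [T [phi [e [m0 phi_add A_inv]]]]]].
- subst n; apply: (@pattern_definable_form _ (fun x => x ord0 + x (lift ord0 ord0) - x ord_max) 0).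
    by move=> x y; ring.
  by move=> x; split=> [->|/eqP]; rewrite ?subrr // subr_eq0 => /eqP.
- apply: (@pattern_definable_form _ (fun x => x ord0 - x ord_max) 0); first by move=> x y; ring.
  by move=> x; split=> [->|/eqP]; rewrite ?subrr // subr_eq0 => /eqP.
- by apply: (@pattern_definable_form _ (fun x => x ord0) c).
- exists m, T, phi, e; split=> // x y xy nAx Ay; apply: nAx.
  exact: A_inv (pattern_equiv_sym xy) Ay.
- exists (m * m'), (T + T')%type, (fun u => match u with inl t => phi t | inr t => phi' t end),
    (fun u => match u with inl t => e t | inr t => e' t end); split.
  + by rewrite mulf_neq0.
  + by case.
  + move=> x y [xy pxy] [Ax|Ax]; [left; apply: A_inv Ax|right; apply: A_inv' Ax]; split.
    * exact: eqmodv_dvd xy.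
    * by move=> t; apply: (pxy (inl t)).
    * by rewrite mulrC in xy; exact: eqmodv_dvd xy.
    * by move=> t; apply: (pxy (inr t)).
- exists m, T, (fun t x => phi t (fun i => x (f i))), e; split=> //.
    by move=> t x y; rewrite phi_add.
  move=> x y [[w xy] pxy]; apply: A_inv; split=> //.
  by exists (fun i => w (f i)) => i; rewrite xy.
- exact: pattern_definable_proj A_inv.
Qed.

(** * The embedding of Z into Z_p *)

Section Embedding.
Variable p : nat.
Hypothesis p_gt1 : (1 < p)%N.

Let pn_neq0 n : (p ^ n)%:Z != 0.
Proof. by rewrite eqz_nat expn_eq0 negb_and; case: p p_gt1. Qed.

Definition emb_seq (z : int) (n : nat) : nat := absz (z %% (p ^ n)%:Z)%Z.

Lemma emb_seqE z n : Posz (emb_seq z n) = (z %% (p ^ n)%:Z)%Z.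
Proof. by rewrite /emb_seq gez0_abs // modz_ge0. Qed.

Lemma emb_seq_coh z : Zp_coh p (emb_seq z).
Proof.
move=> n; split.
  by rewrite -ltz_nat emb_seqE -[X in _ < X]gez0_abs // ltz_mod.
apply/eqP; rewrite -eqz_nat -modz_nat !emb_seqE.
by rewrite {2}(divz_eq z (p ^ n.+1)%:Z) expnS PoszM mulrA modzMDl.
Qed.

Definition emb (z : int) : padic p := exist _ (emb_seq z) (emb_seq_coh z).

Lemma Z_emb_emb z : Z_emb z (emb z).
Proof. by move=> n; rewrite emb_seqE. Qed.

Lemma Z_emb_unique z a : Z_emb z a -> a = emb z.
Proof.
case: a => f f_coh za; apply: eq_sig_hprop => [? ? ?|]; first exact: proof_irrelevance.
by apply: functional_extensionality => n /=; apply/eqP; rewrite -eqz_nat -za emb_seqE.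
Qed.

Lemma emb_inj : injective emb.
Proof.
move=> z z' zz'; have dvd_pn n : ((p ^ n)%:Z %| z - z')%Z.
  by rewrite -eqz_mod_dvd !(Z_emb_emb _ n) zz'.
apply/eqP; rewrite -subr_eq0 -absz_eq0 -leqn0 leqNgt; apply/negP => d_gt0.
have := dvdn_leq d_gt0 (dvd_pn `|z - z'|%N); rewrite absz_nat leqNgt.
by rewrite ltn_expl.
Qed.

Lemma emb_eqE x y : (emb x = emb y) = (x = y).
Proof. by apply: propositional_extensionality; split=> [/emb_inj|->]. Qed.

Lemma restrZE n (X : rset (padic p) n) (x : 'I_n -> int) :
  restrZ X x <-> X (fun i => emb (x i)).
Proof.
split=> [[y [xy Xy]]|Xx]; last by exists (fun i => emb (x i)); split=> // i; apply: Z_emb_emb.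
by rewrite (functional_extensionality y (fun i => emb (x i))) in Xy => // i; apply: Z_emb_unique.
Qed.

End Embedding.

Lemma lin_eqE (c L S E : int) :
  c * L + S = E <-> ((E - S) %% L)%Z = 0 /\ (L = 0 \/ c = ((E - S) %/ L)%Z).
Proof.
have [->|L0] := eqVneq L 0.
  rewrite mulr0 add0r modz0; split=> [->|[/eqP]]; first by rewrite subrr; split; last left.
  by rewrite subr_eq0 => /eqP.
split=> [<-|[/dvdz_mod0P dvd [/eqP|->]]]; last 2 first.
- by rewrite (negbTE L0).
- by rewrite divzK // subrK.
by rewrite addrK modzMl mulzK //; split; last right.
Qed.

Definition residue (m c : int) : 'I_`|m|.+1 := inord `|(c %% m)%Z|.

Definition residues n (m : int) (z : 'I_n -> int) : {ffun 'I_n -> 'I_`|m|.+1} :=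
  [ffun i => residue m (z i)].

Lemma residues_eqmodv n (m : int) (x y : 'I_n -> int) : m != 0 ->
  residues m x = residues m y -> eqmodv m x y.
Proof.
move=> m0 /ffunP xy; exists (fun i => (y i %/ m)%Z - (x i %/ m)%Z) => i.
have mod_lt c : (`|(c %% m)%Z| < `|m|.+1)%N by have := ltz_mod c m0; have := modz_ge0 c m0; lia.
have := xy i; rewrite !ffunE => /(congr1 val); rewrite /= !inordK // => /(congr1 Posz).
rewrite !gez0_abs ?modz_ge0 // => xy_mod.
by rewrite {1}(divz_eq (x i) m) {1}(divz_eq (y i) m) xy_mod; ring.
Qed.

Lemma pattern_invariantE n m (T : Type) phi e (Y : rset int n) (z : 'I_n -> int) :
  m != 0 -> @pattern_invariant n m T phi e Y ->
  Y z <-> exists z0, [/\ residues m z0 = residues m z, Y z0 &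
                         forall t, phi t z0 = e t <-> phi t z = e t].
Proof.
move=> m0 Y_inv; split=> [Yz|[z0 [z0z Yz0 z0e]]]; first by exists z; split.
by apply: Y_inv Yz0; split=> //; apply: residues_eqmodv.
Qed.

(** * Transfer of Z-definable relations to Z_p *)

Section Transfer.
Variables (p : nat) (B : forall n, rset (padic p) n -> Prop).
Hypothesis p_gt1 : (1 < p)%N.
Local Notation embp := (emb p_gt1).

(* Once the class [cl c] is fixed, [D(c; a)] is Y-definable in [c] with integer
   parameters computed from [a] and [cl c]. *)
Definition transfers k (D : rset int k.+1) :=
  exists (G I : finType) (cl : int -> G) (P : ('I_k -> int) -> G -> I -> int)
         (D' : rset (padic p) #|I|.+1),
    definable B D' /\
    forall c a, D' (tuple_of (embp c) (fun i => embp (P a (cl c) i))) <-> D (cons_fun c a).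

Lemma transfers_and k (D D1 D2 : rset int k.+1) :
  transfers D1 -> transfers D2 -> (forall z, D z <-> D1 z /\ D2 z) -> transfers D.
Proof.
move=> [G1 [I1 [cl1 [P1 [D1' [dD1 hD1]]]]]] [G2 [I2 [cl2 [P2 [D2' [dD2 hD2]]]]]] DE.
exists (G1 * G2)%type, (I1 + I2)%type, (fun c => (cl1 c, cl2 c)),
  (fun a g i => match i with inl i1 => P1 a g.1 i1 | inr i2 => P2 a g.2 i2 end),
  (fun z => D1' (tuple_of (z ord0) (fun i1 => param z (inl i1))) /\
            D2' (tuple_of (z ord0) (fun i2 => param z (inr i2)))).
split; first by apply: def_and; apply: def_reindex_param.
by move=> c a; rewrite DE -hD1 -hD2 tuple_of0 !param_tuple_ofE.
Qed.

Lemma transfers_restrZ k (X : rset (padic p) k.+1) : definable B X -> transfers (restrZ X).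
Proof.
move=> dX; exists unit, 'I_k, (fun _ => tt), (fun a _ i => a i),
  (fun z => X (cons_fun (z ord0) (fun i => param z i))).
split; first exact: (def_reindex_param id dX).
by move=> c a; rewrite tuple_of0 param_tuple_ofE (restrZE p_gt1) (cons_fun_map embp).
Qed.

Section PatternTransfer.
Variables (k : nat) (Y : rset int k.+1) (m : int) (T : finType).
Variables (phi : T -> ('I_k.+1 -> int) -> int) (e : T -> int).
Hypotheses (m0 : m != 0) (phi_add : forall t, additive_form (phi t)).
Hypothesis Y_inv : pattern_invariant m phi e Y.

Let slope t := phi t (cons_fun 1 (fun _ => 0)).
Let psi t a := phi t (cons_fun 0 a).
Let Rv := {ffun 'I_k.+1 -> 'I_`|m|.+1}.
Let Par := (T * bool + Rv)%type.

Let res_cons g (a : 'I_k -> int) : Rv := [ffun i => cons_fun g (fun j => residue m (a j)) i].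

(* By [lin_eqE], [c * slope t + psi t a = e t] is a condition on [c] and the parameters
   at [(t, _)]; the parameter at [r] vanishes iff [r] is the residue vector of [(c, a)]. *)
Let params a g (i : Par) : int := match i with
  | inl (t, false) => ((e t - psi t a) %% slope t)%Z
  | inl (t, true) => ((e t - psi t a) %/ slope t)%Z
  | inr r => if r == res_cons g a then 0 else 1 end.

Let atom (j : T + Rv) (z : 'I_#|{: Par}|.+1 -> padic p) : Prop := match j with
  | inl t => param z (inl (t, false)) = embp 0 /\ (slope t = 0 \/ z ord0 = param z (inl (t, true)))
  | inr r => param z (inr r) = embp 0 end.

Let atom_definable j : definable B (atom j).
Proof.
case: j => [t|r]; last exact: def_coord_const.
by apply: def_and; [exact: def_coord_const|apply: def_union; [exact: def_prop|exact: def_coord_eq]].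
Qed.

Let params_tuple c a := tuple_of (embp c) (fun i => embp (params a (residue m c) i)).

Let atom_eqP c a t : atom (inl t) (params_tuple c a) <-> phi t (cons_fun c a) = e t.
Proof.
rewrite /atom /params_tuple /param /tuple_of !cons_funS !enum_rankK cons_fun0 !emb_eqE.
by rewrite additive_form_cons // lin_eqE.
Qed.

Let atom_residueP c a r : atom (inr r) (params_tuple c a) <-> r = residues m (cons_fun c a).
Proof.
have -> : residues m (cons_fun c a) = res_cons (residue m c) a.
  by apply/ffunP => i; rewrite !ffunE /cons_fun; case: unlift.
by rewrite /atom /params_tuple /param /tuple_of cons_funS enum_rankK emb_eqE /params; case: eqP.
Qed.

Lemma transfers_pattern_invariant : transfers Y.
Proof.
pose pattern_ok (b : T + Rv -> bool) := exists r, b (inr r) /\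
  exists z0, [/\ residues m z0 = r, Y z0 & forall t, phi t z0 = e t <-> b (inl t)].
exists 'I_`|m|.+1, Par, (residue m), params,
  (fun z => exists b : T + Rv -> bool, (forall j, atom j z <-> b j) /\ pattern_ok b).
split=> [|c a]; first exact: def_exists_bits.
rewrite (pattern_invariantE _ m0 Y_inv) -/(params_tuple c a); split.
- case=> b [hb [r [br [z0 [z0r Yz0 z0b]]]]]; exists z0; split=> //.
    by rewrite z0r; apply/atom_residueP/hb.
  move=> t; apply: iff_trans (z0b t) _.
  exact: iff_trans (iff_sym (hb (inl t))) (atom_eqP c a t).
- case=> z0 [z0r Yz0 z0e]; have [b hb] := exists_indicator (fun j => atom j (params_tuple c a)).
  exists b; split=> //; exists (residues m (cons_fun c a)); split; first exact/hb/atom_residueP.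
  exists z0; split=> // t; apply: iff_trans (z0e t) _.
  exact: iff_trans (iff_sym (atom_eqP c a t)) (hb (inl t)).
Qed.

End PatternTransfer.

Lemma transfers_pattern k (Y : rset int k.+1) : pattern_definable Y -> transfers Y.
Proof. by case=> m [T [phi [e [m0 phi_add Y_inv]]]]; exact: transfers_pattern_invariant Y_inv. Qed.

Lemma transfers_decomposition k (D : rset int k.+1) :
  (exists (X : rset (padic p) k.+1) (Y : rset int k.+1),
     definable B X /\ definable Zplus Y /\ forall x, D x <-> (restrZ X x /\ Y x)) ->
  transfers D.
Proof.
case=> X [Y [dX [dY DE]]].
exact: transfers_and (transfers_restrZ dX) (transfers_pattern (Zplus_pattern_definable dY)) DE.
Qed.

Lemma dp_minimal_induced_of_transfers :
  (forall k (D : rset int k.+1), definable (induced B) D -> transfers D) ->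
  dp_minimal B -> dp_minimal (induced B).
Proof.
move=> transf dpB [k [l [D [E [dD [dE pat]]]]]].
have [GD [ID [clD [PD [D' [dD' hD']]]]]] := transf _ _ dD.
have [GE [IE [clE [PE [E' [dE' hE']]]]]] := transf _ _ dE.
apply: dpB; exists #|ID|, #|IE|, D', E'; do 2!split=> //; move=> N.
have [N0 gridN0] := monochromatic_grid (GD * GE)%type N.
have [a [b ab]] := pat N0.
pose witness i j c := (forall i', (i' < N0)%N -> (D (cons_fun c (a i')) <-> i' = i)) /\
                      (forall j', (j' < N0)%N -> (E (cons_fun c (b j')) <-> j' = j)).
pose cell i j := epsilon (inhabits 0) (witness i j).
have cellP i j : (i < N0)%N -> (j < N0)%N -> witness i j (cell i j).
  by move=> iN jN; apply: epsilon_spec; apply: ab.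
have [g [I [J [IN0 JN0 I_inj J_inj mono]]]] :=
  gridN0 (fun i j => (clD (cell i j), clE (cell i j))).
exists (fun i u => embp (PD (a (I i)) g.1 (enum_val u))),
       (fun j u => embp (PE (b (J j)) g.2 (enum_val u))).
move=> i j iN jN; exists (embp (cell (I i) (J j))).
have [Dcell Ecell] := cellP _ _ (IN0 i iN) (JN0 j jN).
rewrite -(mono i j iN jN) /=; split.
  move=> i' i'N; rewrite hD' (Dcell _ (IN0 i' i'N)).
  by split=> [/I_inj|->//]; apply.
move=> j' j'N; rewrite hE' (Ecell _ (JN0 j' j'N)).
by split=> [/J_inj|->//]; apply.
Qed.

End Transfer.

Local Close Scope ring_scope.

Theorem proposition11p8 (p : nat) (B : forall n, rset (padic p) n -> Prop) :
  prime p -> odd p ->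
  (* Y = (Z_p, B) is an expansion of (Z_p, +, Val_p) *)
  B 3 (@Zp_add_graph p) -> B 2 (@Zp_val_le p) ->
  dp_minimal B ->
  (forall (n : nat) (A : rset int n), definable (induced B) A ->
     exists (X : rset (padic p) n) (Y : rset int n),
       definable B X /\ definable Zplus Y /\
       forall x, A x <-> (restrZ X x /\ Y x)) ->
  dp_minimal (induced B).
Proof.
move=> p_prime _ _ _ dpB decomp.
apply: (dp_minimal_induced_of_transfers (p_gt1 := prime_gt1 p_prime)) dpB => k D dD.
exact: transfers_decomposition (decomp _ _ dD).
Qed.
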